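(* Let $\mathcal{X}$ be a finite set, $\pi$ a probability mass function on $\mathcal{X}$ with full support, and let a group $\mathcal{G}$ act on $\mathcal{X}$. Let $G$, $M$, $B$ be the Gibbs, Metropolis–Hastings and Barker orbit kernels for this same action. Then $GM=MG=BG=GB=G$.
   Context: With $\mathcal{O}(x)$ the orbit of $x$ and $\pi(A)=\sum_{z\in A}\pi(z)$: $G(x,y)=\pi(y)/\pi(\mathcal{O}(x))$ for $y\in\mathcal{O}(x)$ and $0$ otherwise; $M(x,y)=\frac{1}{|\mathcal{O}(x)|-1}\min\{1,\pi(y)/\pi(x)\}$ for $y\in\mathcal{O}(x)\setminus\{x\}$, $0$ for $y\notin\mathcal{O}(x)$, and $M(x,x)=1-\sum_{y\ne x}M(x,y)$ (so $M(x,x)=1$ for singleton orbits); $B$ is defined like $M$ with acceptance $\pi(y)/(\pi(x)+\pi(y))$. *)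

From mathcomp Require Import all_boot all_order all_algebra.
From mathcomp Require Import boolp.
Set Implicit Arguments. Unset Strict Implicit. Unset Printing Implicit Defensive.
Import Order.TTheory GRing.Theory Num.Theory.
Local Open Scope ring_scope.

Section OrbitKernels.
Variables (R : realFieldType) (X : finType) (Gt : Type) (act : Gt -> X -> X)
  (pi : X -> R).

Definition orbit (x : X) : {set X} := [set y | `[< exists g : Gt, act g x = y >]].

Definition piS (A : {set X}) : R := \sum_(z in A) pi z.

Definition gibbs (x y : X) : R :=
  if y \in orbit x then pi y / piS (orbit x) else 0.

(* Generic "propose uniformly in the orbit, accept with probability acc x y" kernel *)
Definition orbit_off (acc : X -> X -> R) (x y : X) : R :=
  if (y \in orbit x) && (y != x)
  then (#|orbit x|%:R - 1)^-1 * acc x y else 0.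

Definition orbit_kernel (acc : X -> X -> R) (x y : X) : R :=
  if y == x then 1 - \sum_(z | z != x) orbit_off acc x z
  else orbit_off acc x y.

Definition mh : X -> X -> R :=
  orbit_kernel (fun x y => Num.min 1 (pi y / pi x)).

Definition barker : X -> X -> R :=
  orbit_kernel (fun x y => pi y / (pi x + pi y)).

End OrbitKernels.

Definition kmul (R : realFieldType) (X : finType) (K L : X -> X -> R) : X -> X -> R :=
  fun x y => \sum_(z : X) K x z * L z y.

(* G(x, .) is pi conditioned on the orbit of x, so it depends on x only through
   that orbit.  Hence K G = G for every orbit kernel K: K(x, .) is a probability
   supported on O(x).  Conversely, (G K)(x, y) is the pi-mass flowing into y from
   O(x) under K, divided by pi(O(x)); since both acceptance rules satisfy detailed
   balance, pi(x) a(x, y) = pi(y) a(y, x), pi is stationary for K and this mass is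
   pi(y), i.e. G K = G. *)
From Pilot Require Import Defs.
From mathcomp Require Import all_boot all_order all_algebra.
From mathcomp Require Import boolp.
Set Implicit Arguments. Unset Strict Implicit. Unset Printing Implicit Defensive.
Import Order.TTheory GRing.Theory Num.Theory.
Local Open Scope ring_scope.

Section GroupOrbits.
Variables (X : finType) (Gt : Type) (mul : Gt -> Gt -> Gt) (one : Gt)
  (inv : Gt -> Gt) (act : Gt -> X -> X).
Hypotheses (mulVg : forall a, mul (inv a) a = one)
  (act1 : forall x, act one x = x)
  (actM : forall g h x, act (mul g h) x = act g (act h x)).
Local Notation orb := (Defs.orbit act).

Lemma act_orbit_refl x : x \in orb x.
Proof. by rewrite inE; apply/asboolP; exists one. Qed.

Lemma act_orbit_eq x y : y \in orb x -> orb y = orb x.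
Proof.
rewrite inE => /asboolP [g gx_y]; apply/setP => z; rewrite !inE.
apply/asboolP/asboolP => [[h hy_z] | [h hx_z]].
  by exists (mul h g); rewrite actM gx_y.
by exists (mul h (inv g)); rewrite actM -gx_y -(actM (inv g)) mulVg act1.
Qed.

End GroupOrbits.

Section OrbitKernels.
Variables (R : realFieldType) (X : finType) (Gt : Type) (act : Gt -> X -> X)
  (pi : X -> R).
Local Notation orb := (Defs.orbit act).
Hypotheses (orbit_refl : forall x, x \in orb x)
  (orbit_eq : forall {x y}, y \in orb x -> orb y = orb x).

Lemma orbit_sym x y : (y \in orb x) = (x \in orb y).
Proof. by apply/idP/idP => /orbit_eq ->; apply: orbit_refl. Qed.

Lemma orbit_kernel_row_sum (acc : X -> X -> R) x :
  \sum_y orbit_kernel act acc x y = 1.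
Proof.
rewrite (bigD1 x) //= /orbit_kernel eqxx.
by under eq_bigr => y /negbTE -> do []; rewrite subrK.
Qed.

Lemma orbit_kernel_out (acc : X -> X -> R) x y :
  y \notin orb x -> orbit_kernel act acc x y = 0.
Proof.
move=> yNOx; have yNx : y != x by apply: contraNneq yNOx => ->.
by rewrite /orbit_kernel (negbTE yNx) /orbit_off (negbTE yNOx).
Qed.

Lemma gibbs_orbit_eq x z y :
  z \in orb x -> gibbs act pi z y = gibbs act pi x y.
Proof. by rewrite /gibbs => /orbit_eq ->. Qed.

Lemma kmul_orbit_kernel_gibbs (acc : X -> X -> R) x y :
  kmul (orbit_kernel act acc) (gibbs act pi) x y = gibbs act pi x y.
Proof.
rewrite /kmul (eq_bigr (fun z => orbit_kernel act acc x z * gibbs act pi x y)).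
  by rewrite -big_distrl /= orbit_kernel_row_sum mul1r.
move=> z _; have [/gibbs_orbit_eq -> // | zNOx] := boolP (z \in orb x).
by rewrite orbit_kernel_out // !mul0r.
Qed.

Variable acc : X -> X -> R.
Hypothesis acc_balance : forall x y, pi x * acc x y = pi y * acc y x.

Lemma orbit_off_balance x y :
  pi x * orbit_off act acc x y = pi y * orbit_off act acc y x.
Proof.
rewrite /orbit_off orbit_sym eq_sym.
have [xOy | _] := boolP (x \in orb y); last by rewrite !mulr0.
rewrite (orbit_eq xOy) /=; case: (x != y); last by rewrite !mulr0.
by rewrite mulrCA acc_balance mulrCA.
Qed.

Lemma orbit_kernel_stationary y :
  \sum_z pi z * orbit_kernel act acc z y = pi y.
Proof.
rewrite (bigD1 y) //= {1}/orbit_kernel eqxx.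
under eq_bigr => z zNy.
  rewrite /orbit_kernel eq_sym (negbTE zNy) orbit_off_balance.
over.
by rewrite -big_distrr -mulrDr subrK mulr1.
Qed.

Lemma kmul_gibbs_orbit_kernel x y :
  kmul (gibbs act pi) (orbit_kernel act acc) x y = gibbs act pi x y.
Proof.
rewrite /kmul /gibbs; have [yOx | yNOx] := boolP (y \in orb x).
- rewrite -(orbit_kernel_stationary y) mulr_suml; apply: eq_bigr => z _.
  have [_ | zNOx] := boolP (z \in orb x); first by rewrite mulrAC.
  by rewrite orbit_kernel_out ?mulr0 ?mul0r // orbit_sym (orbit_eq yOx).
- apply: big1 => z _; have [zOx | _] := boolP (z \in orb x); last by rewrite mul0r.
  by rewrite orbit_kernel_out ?mulr0 // (orbit_eq zOx).
Qed.

End OrbitKernels.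

Lemma mh_acc_balance (R : realFieldType) (X : Type) (pi : X -> R)
  (pi_pos : forall x, 0 < pi x) x y :
  pi x * Num.min 1 (pi y / pi x) = pi y * Num.min 1 (pi x / pi y).
Proof.
rewrite !minr_pMr ?ltW // !mulr1 ![pi _ * (_ / _)]mulrC !divfK ?gt_eqF //.
exact: minC.
Qed.

Lemma barker_acc_balance (R : realFieldType) (X : Type) (pi : X -> R) x y :
  pi x * (pi y / (pi x + pi y)) = pi y * (pi x / (pi y + pi x)).
Proof. by rewrite addrC mulrCA. Qed.

Theorem lemma3p4 (R : realFieldType) (X : finType)
  (Gt : Type) (mul : Gt -> Gt -> Gt) (one : Gt) (inv : Gt -> Gt)
  (mulA : forall a b c, mul a (mul b c) = mul (mul a b) c)
  (mul1g : forall a, mul one a = a)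
  (mulVg : forall a, mul (inv a) a = one)
  (act : Gt -> X -> X)
  (act1 : forall x, act one x = x)
  (actM : forall g h x, act (mul g h) x = act g (act h x))
  (pi : X -> R)
  (pi_pos : forall x, 0 < pi x)
  (pi_sum : \sum_(x : X) pi x = 1) :
  let G := gibbs act pi in
  let M := mh act pi in
  let B := barker act pi in
  (forall x y, kmul G M x y = G x y) /\
  (forall x y, kmul M G x y = G x y) /\
  (forall x y, kmul B G x y = G x y) /\
  (forall x y, kmul G B x y = G x y).
Proof.
have refl := act_orbit_refl act1.
have oeq := act_orbit_eq mulVg act1 actM.
move=> G M B; split; last split; last split.
- exact: kmul_gibbs_orbit_kernel refl oeq _ (mh_acc_balance pi_pos).
- exact: kmul_orbit_kernel_gibbs pi refl oeq _.
- exact: kmul_orbit_kernel_gibbs pi refl oeq _.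
- exact: kmul_gibbs_orbit_kernel refl oeq _ (barker_acc_balance pi).
Qed.
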